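(* Let $G$ be a finite graph with no frozen vertices. Then the Mycielskian $M(G)$ of $G$ has no frozen vertices.
   Context: For a graph $H$, a vertex $x$ is frozen if for every $\chi(H)$-colouring of $H$ all $\chi(H)$ colours appear on the closed neighbourhood of $x$ (so $x$ can never be recoloured); $\chi$ denotes the chromatic number. If $G$ has vertices $v_1,\dots,v_n$, its Mycielskian $M(G)$ is obtained by adding new vertices $u_1,\dots,u_n,w$, edges $wu_i$ for all $i$, and for each edge $v_iv_j\in E(G)$ the edges $u_iv_j$ and $v_iu_j$. It is known that $\chi(M(G))=\chi(G)+1$. *)

From mathcomp Require Import all_boot.
Set Implicit Arguments. Unset Strict Implicit. Unset Printing Implicit Defensive.

(* A finite simple graph is a symmetric irreflexive relation e on a finType T. *)

Definition colourable (T : finType) (e : rel T) (k : nat) : bool :=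
  [exists f : {ffun T -> 'I_k}, [forall x, forall y, e x y ==> (f x != f y)]].

Lemma colourable_card (T : finType) (e : rel T) :
  [forall x, ~~ e x x] -> exists k, colourable e k.
Proof.
move=> /forallP irr; exists #|T|; apply/existsP; exists [ffun x => enum_rank x].
apply/forallP => x; apply/forallP => y; apply/implyP => exy.
rewrite !ffunE; apply/negP => /eqP /enum_rank_inj exy'.
by move: (irr x); rewrite {2}exy' exy.
Qed.

(* Chromatic number: least k such that e is k-colourable (for an irreflexive
   relation; defined as 0 otherwise, never used). *)
Definition chi (T : finType) (e : rel T) : nat :=
  match boolP [forall x, ~~ e x x] with
  | AltTrue h => ex_minn (colourable_card h)
  | AltFalse _ => 0
  end.

Definition proper_colouring (T : finType) (e : rel T) (k : nat)
  (f : T -> 'I_k) : Prop := forall x y, e x y -> f x != f y.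

Definition frozen (T : finType) (e : rel T) (x : T) : Prop :=
  forall f : T -> 'I_(chi e), proper_colouring e f ->
  forall c : 'I_(chi e), exists y, ((y == x) || e x y) && (f y == c).

(* Mycielskian: vertices Some (inl v_i), Some (inr u_i), and None = w. *)
Definition myc_rel (T : finType) (e : rel T) : rel (option (T + T)) :=
  fun a b =>
  match a, b with
  | Some (inl x), Some (inl y) => e x y
  | Some (inl x), Some (inr y) => e x y
  | Some (inr x), Some (inl y) => e x y
  | None, Some (inr _) => true
  | Some (inr _), None => true
  | _, _ => false
  end.

From mathcomp Require Import all_boot.
From Stdlib Require Import Classical_Prop.

Set Implicit Arguments.
Unset Strict Implicit.
Unset Printing Implicit Defensive.

(* Let f be a chi(G)-colouring in which the colour c is missing on N[x].
   Colouring v_i and u_i by f(i) and w by a new colour gives a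
   chi(M(G))-colouring, as chi(M(G)) = chi(G) + 1, in which c is still missing
   on N[v_x] and on N[u_x].  Colouring instead every u_i by the new colour and
   w by f(x), the colour c, which differs from f(x), is missing on N[w]. *)

Section Colourings.

Variables (T : finType) (e : rel T).

Lemma colourableP k :
  reflect (exists f : T -> 'I_k, proper_colouring e f) (colourable e k).
Proof.
apply: (iffP existsP) => [[f /forallP fP] | [f fP]].
  by exists f => x y exy; move/forallP/(_ y)/implyP: (fP x); apply.
exists [ffun x => f x]; apply/forallP => x; apply/forallP => y.
by apply/implyP => exy; rewrite !ffunE fP.
Qed.

Lemma colourable_omit n (g : T -> 'I_n.+1) a :
  proper_colouring e g -> (forall x, a != g x) -> colourable e n.
Proof.
move=> gP ga; apply/colourableP.
pose h x := s2val (unlift_some (ga x)).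
have ghK x : g x = lift a (h x) by rewrite /h; case: unlift_some.
by exists h => x y /gP; rewrite !ghK; apply: contra => /eqP ->.
Qed.

Lemma not_frozenP x :
  ~ frozen e x <->
  exists2 f : T -> 'I_(chi e), proper_colouring e f &
    exists c, forall y, (y == x) || e x y -> f y != c.
Proof.
split=> [nfr | [f fP [c fc]] fr].
  apply: NNPP => nex; apply: nfr => f fP c; apply: NNPP => nc.
  apply: nex; exists f => //; exists c => y Ny; apply/negP => /eqP fyc.
  by apply: nc; exists y; rewrite Ny fyc eqxx.
have [y /andP [Ny /eqP fyc]] := fr f fP c.
by move: (fc y Ny); rewrite fyc eqxx.
Qed.

Hypothesis irr : irreflexive e.

Let irr_forall : [forall x, ~~ e x x].
Proof. by apply/forallP => x; rewrite irr. Qed.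

Lemma chiE : chi e = ex_minn (colourable_card irr_forall).
Proof.
rewrite /chi; destruct (boolP _) as [h | h]; last by rewrite irr_forall in h.
by rewrite (bool_irrelevance h irr_forall).
Qed.

Lemma colourable_chi : colourable e (chi e).
Proof. by rewrite chiE; case: ex_minnP. Qed.

Lemma chi_min k : colourable e k -> chi e <= k.
Proof. by rewrite chiE; case: ex_minnP => m _; apply. Qed.

End Colourings.

Section Mycielskian.

Variables (T : finType) (e : rel T).

Definition myc_colouring (C : Type) (fv fu : T -> C) (cw : C) :
    option (T + T) -> C :=
  fun a => match a with
  | Some (inl x) => fv x
  | Some (inr x) => fu x
  | None => cw
  end.

(* Recolouring by u_x each v_x that has the colour of w: this colouring of G
   avoids the colour of w, whence chi(M(G)) > chi(G). *)
Definition myc_fold n (g : option (T + T) -> 'I_n) (x : T) : 'I_n :=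
  if g (Some (inl x)) == g None then g (Some (inr x)) else g (Some (inl x)).

Lemma myc_fold_proper n (g : option (T + T) -> 'I_n) :
  proper_colouring (myc_rel e) g -> proper_colouring e (myc_fold g).
Proof.
move=> gP x y exy; rewrite /myc_fold.
have vxy : g (Some (inl x)) != g (Some (inl y)) by exact: gP.
case: (g (Some (inl x)) =P g None) => [vxw | _];
  case: (g (Some (inl y)) =P g None) => [vyw | _]; try exact: gP.
by move: vxy; rewrite vxw vyw eqxx.
Qed.

Lemma myc_fold_avoid n (g : option (T + T) -> 'I_n) x :
  proper_colouring (myc_rel e) g -> g None != myc_fold g x.
Proof.
move=> gP; rewrite /myc_fold; case: ifPn => [_ | ]; first exact: gP.
by rewrite eq_sym.
Qed.

Hypothesis sym : symmetric e.

Lemma myc_colouring_proper k (fv fu : T -> 'I_k) cw :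
  proper_colouring e fv ->
  (forall x y, e x y -> fv x != fu y) -> (forall x, fu x != cw) ->
  proper_colouring (myc_rel e) (myc_colouring fv fu cw).
Proof.
move=> fvP fvu fuw [[x|x]|] [[y|y]|] //= exy.
- exact: fvP.
- exact: fvu.
- by rewrite eq_sym fvu // sym.
- by rewrite eq_sym.
Qed.

Definition myc_lift k (f : T -> 'I_k) : option (T + T) -> 'I_k.+1 :=
  myc_colouring (lift ord_max \o f) (lift ord_max \o f) ord_max.

Lemma myc_lift_proper k (f : T -> 'I_k) :
  proper_colouring e f -> proper_colouring (myc_rel e) (myc_lift f).
Proof.
move=> fP; apply: myc_colouring_proper => [x y | x y exy | x] /=.
- by rewrite (inj_eq lift_inj); apply: fP.
- by rewrite (inj_eq lift_inj); apply: fP.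
- by rewrite eq_sym neq_lift.
Qed.

Hypothesis irr : irreflexive e.

Lemma chi_myc : chi (myc_rel e) = (chi e).+1.
Proof.
have irrM : irreflexive (myc_rel e) by case=> [[x|x]|] /=.
apply/eqP; rewrite eqn_leq; apply/andP; split.
  apply: chi_min irrM _ _; have /colourableP [f fP] := colourable_chi irr.
  by apply/colourableP; exists (myc_lift f); apply: myc_lift_proper.
have /colourableP [g gP] := colourable_chi irrM.
case: (chi (myc_rel e)) g gP => [g | n g gP]; first by case: (g None).
rewrite ltnS; apply: chi_min irr _ (colourable_omit (myc_fold_proper gP) _).
by move=> x; apply: myc_fold_avoid.
Qed.

Lemma myc_copies_not_frozen x :
  ~ frozen e x ->
  ~ frozen (myc_rel e) (Some (inl x)) /\ ~ frozen (myc_rel e) (Some (inr x)).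
Proof.
case/not_frozenP => f fP [c fc].
have liftP : proper_colouring (myc_rel e) (myc_lift f) by apply: myc_lift_proper.
split; apply/not_frozenP; rewrite chi_myc; exists (myc_lift f) => //;
  exists (lift ord_max c); case=> [[y|y]|] //= Ny;
  rewrite ?neq_lift // (inj_eq lift_inj) fc //; move: Ny;
  by [move=> ->; rewrite orbT | rewrite orbF => /eqP [->]; rewrite eqxx].
Qed.

Lemma myc_apex_not_frozen x : ~ frozen e x -> ~ frozen (myc_rel e) None.
Proof.
case/not_frozenP => f fP [c fc].
have fxc : f x != c by apply: fc; rewrite eqxx.
apply/not_frozenP; rewrite chi_myc.
exists (myc_colouring (lift ord_max \o f) (fun=> ord_max) (lift ord_max (f x))).
  apply: myc_colouring_proper => [y z | y z _ | y] /=.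
  - by rewrite (inj_eq lift_inj); apply: fP.
  - by rewrite eq_sym neq_lift.
  - exact: neq_lift.
exists (lift ord_max c); case=> [[y|y]|] //= _; first exact: neq_lift.
by rewrite (inj_eq lift_inj).
Qed.

End Mycielskian.

Theorem lemma2p5 (T : finType) (e : rel T) :
  symmetric e -> irreflexive e -> 0 < #|T| ->
  (forall x : T, ~ frozen e x) ->
  forall z : option (T + T), ~ frozen (myc_rel e) z.
Proof.
move=> sym irr /card_gt0P [x0 _] nfr [[x|x]|].
- exact: (myc_copies_not_frozen sym irr (nfr x)).1.
- exact: (myc_copies_not_frozen sym irr (nfr x)).2.
- exact: (myc_apex_not_frozen sym irr (nfr x0)).
Qed.
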